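(* Let ${\bf a}=(a_n)_{n\in\mathbb N}$ be complex numbers, $A_n=\sum_{k=0}^n|a_k|$. Assume that for every contraction $P$ on every Hilbert space $\mathcal H$ and every $f\in\mathcal H$, the condition $\sum_{n\in\mathbb N}|a_n|A_n\|P^nf\|_{\mathcal H}^2<\infty$ implies that $\sum_{n\in\mathbb N}a_nP^nf$ converges in $\mathcal H$. Then the Nörlund matrix $N_{\bf a}$ is bounded on $\ell^2(\mathbb N)$.
   Context: The Nörlund matrix $N_{\bf a}=(a_{ij})$ has entries $a_{ij}=a_{i-j}/A_i$ if $0\le j\le i$ and $A_i>0$, and $a_{ij}=0$ otherwise; it is bounded on $\ell^2(\mathbb N)$ if there is $C$ with $\|N_{\bf a}u\|_{\ell^2}\le C\|u\|_{\ell^2}$ for all finitely supported sequences $u$. *)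

From Stdlib Require Import Reals Lra.
Open Scope R_scope.

Definition Cx := (R * R)%type.
Definition RtoC (x : R) : Cx := (x, 0).
Definition C0 : Cx := (0, 0).
Definition C1 : Cx := (1, 0).
Definition Cplus (z w : Cx) : Cx := (fst z + fst w, snd z + snd w).
Definition Cmult (z w : Cx) : Cx :=
  (fst z * fst w - snd z * snd w, fst z * snd w + snd z * fst w).
Definition Cconj (z : Cx) : Cx := (fst z, - snd z).
Definition Cmod (z : Cx) : R := sqrt (fst z ^ 2 + snd z ^ 2).
Definition Re (z : Cx) : R := fst z.

(** * Complex Hilbert spaces (inner product linear in the first argument) *)
Record HilbertSpace : Type := {
  Hcar :> Type;
  Hzero : Hcar;
  Hadd : Hcar -> Hcar -> Hcar;
  Hopp : Hcar -> Hcar;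
  Hscal : Cx -> Hcar -> Hcar;
  Hinner : Hcar -> Hcar -> Cx;
  Hadd_assoc : forall x y z, Hadd x (Hadd y z) = Hadd (Hadd x y) z;
  Hadd_comm : forall x y, Hadd x y = Hadd y x;
  Hadd_zero : forall x, Hadd x Hzero = x;
  Hadd_opp : forall x, Hadd x (Hopp x) = Hzero;
  Hscal_one : forall x, Hscal C1 x = x;
  Hscal_assoc : forall a b x, Hscal a (Hscal b x) = Hscal (Cmult a b) x;
  Hscal_distr_l : forall a x y, Hscal a (Hadd x y) = Hadd (Hscal a x) (Hscal a y);
  Hscal_distr_r : forall a b x, Hscal (Cplus a b) x = Hadd (Hscal a x) (Hscal b x);
  Hinner_add_l : forall x y z, Hinner (Hadd x y) z = Cplus (Hinner x z) (Hinner y z);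
  Hinner_scal_l : forall a x y, Hinner (Hscal a x) y = Cmult a (Hinner x y);
  Hinner_conj : forall x y, Hinner y x = Cconj (Hinner x y);
  Hinner_pos : forall x, 0 <= Re (Hinner x x);
  Hinner_def : forall x, Hinner x x = C0 -> x = Hzero;
  Hcomplete : forall s : nat -> Hcar,
    (forall eps, eps > 0 -> exists N, forall m n, (m >= N)%nat -> (n >= N)%nat ->
        sqrt (Re (Hinner (Hadd (s m) (Hopp (s n))) (Hadd (s m) (Hopp (s n))))) < eps) ->
    exists l, forall eps, eps > 0 -> exists N, forall n, (n >= N)%nat ->
        sqrt (Re (Hinner (Hadd (s n) (Hopp l)) (Hadd (s n) (Hopp l)))) < eps
}.

Arguments Hzero {h}. Arguments Hadd {h}. Arguments Hopp {h}.
Arguments Hscal {h}. Arguments Hinner {h}.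

Definition Hnorm {H : HilbertSpace} (x : H) : R := sqrt (Re (Hinner x x)).

Definition contraction {H : HilbertSpace} (P : H -> H) : Prop :=
  (forall x y, P (Hadd x y) = Hadd (P x) (P y)) /\
  (forall a x, P (Hscal a x) = Hscal a (P x)) /\
  (forall x, Hnorm (P x) <= Hnorm x).

Fixpoint Hpsum {H : HilbertSpace} (g : nat -> H) (n : nat) : H :=
  match n with
  | O => g O
  | S m => Hadd (Hpsum g m) (g (S m))
  end.

Definition Hseries_converges {H : HilbertSpace} (g : nat -> H) : Prop :=
  exists l : H, forall eps, eps > 0 -> exists N, forall n, (n >= N)%nat ->
    Hnorm (Hadd (Hpsum g n) (Hopp l)) < eps.

Definition Rseries_converges (s : nat -> R) : Prop := exists l, infinite_sum s l.

Definition Aseq (a : nat -> Cx) (n : nat) : R := sum_f_R0 (fun k => Cmod (a k)) n.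

Definition norlund_entry (a : nat -> Cx) (i j : nat) : Cx :=
  if (Nat.leb j i) then
    (if Rlt_dec 0 (Aseq a i) then Cmult (RtoC (/ Aseq a i)) (a (i - j)%nat) else C0)
  else C0.

Fixpoint Csum (g : nat -> Cx) (n : nat) : Cx :=
  match n with
  | O => g O
  | S m => Cplus (Csum g m) (g (S m))
  end.

(** (N_a u)_i = sum_j a_{ij} u_j ; entries with j > i vanish *)
Definition norlund_apply (a : nat -> Cx) (u : nat -> Cx) (i : nat) : Cx :=
  Csum (fun j => Cmult (norlund_entry a i j) (u j)) i.

Definition finitely_supported (u : nat -> Cx) : Prop :=
  exists M, forall n, (n >= M)%nat -> u n = C0.

(** ||v||_{l^2} <= c * ||u||_{l^2}, with u supported in [0, M) and the l^2 norm of v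
    expressed via all its partial sums. *)
Definition norlund_bounded (a : nat -> Cx) : Prop :=
  exists c : R, forall u : nat -> Cx, forall M : nat,
    (forall n, (n >= M)%nat -> u n = C0) ->
    forall K : nat,
      sqrt (sum_f_R0 (fun i => Cmod (norlund_apply a u i) ^ 2) K)
      <= c * sqrt (sum_f_R0 (fun j => Cmod (u j) ^ 2) M).

From Stdlib Require Import Reals Lra Lia Psatz ZArith.
From Stdlib Require Import Classical ClassicalEpsilon FunctionalExtensionality ProofIrrelevance.
From Coquelicot Require Import Coquelicot.
(* Imported last: [Defs] reuses names ([C1], [Cmod], ...) that Coquelicot also exports. *)
From Pilot Require Import Defs.
Open Scope R_scope.

(** Suppose [N_a] is unbounded.  By duality its transpose is unbounded on finite
    sections, so for every [k] there is a finite vector [v_k] with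
    [|N_a^T v_k|^2 >= 16^k |v_k|^2].  Lay the [v_k] side by side in disjoint
    blocks of [l^2], rescaled so that block [k] carries mass [4^-k], and divided
    pointwise by [A_r].  Let [P] be the shift to the left inside each block
    (killing the first entry of each block): a contraction.  Then
    [|P^n f|^2] only sees the entries of [f] at offset [>= n] in their block,
    and since [sum_(n <= r) |a_n| A_n <= A_r^2] the weighted series
    [sum |a_n| A_n |P^n f|^2] is bounded by [sum_k 4^-k].  But on block [k]
    the partial sums of [sum a_n P^n f] reproduce the rescaled [N_a^T v_k], whose
    norm squared is at least [4^k]: the series [sum a_n P^n f] diverges. *)

Lemma ex_series_le_nonneg (u v : nat -> R) :
  (forall n, 0 <= u n <= v n) -> ex_series v -> ex_series u.
Proof.
  intros Huv Hv; apply (ex_series_le u v); auto.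
  intros n; change (Rabs (u n) <= v n); rewrite Rabs_pos_eq; apply Huv.
Qed.

Lemma ex_series_mult_l (c : R) (u : nat -> R) : ex_series u -> ex_series (fun n => c * u n).
Proof. exact (ex_series_scal_l c u). Qed.

Lemma ex_series_Rplus (u v : nat -> R) :
  ex_series u -> ex_series v -> ex_series (fun n => u n + v n).
Proof. exact (ex_series_plus u v). Qed.

Lemma ex_series_Rabs_le (u v : nat -> R) :
  (forall n, Rabs (u n) <= v n) -> ex_series v -> ex_series u.
Proof. intros Huv Hv; apply (ex_series_le u v); auto. Qed.

Lemma sum_f_R0_le_Series (u : nat -> R) N :
  (forall n, 0 <= u n) -> ex_series u -> sum_f_R0 u N <= Series u.
Proof.
  intros Hu Hex; apply sum_incr; auto.
  apply is_series_Reals, Series_correct, Hex.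
Qed.

Lemma term_le_Series (u : nat -> R) j : (forall n, 0 <= u n) -> ex_series u -> u j <= Series u.
Proof.
  intros Hu Hex; eapply Rle_trans; [| apply (sum_f_R0_le_Series u j Hu Hex)].
  destruct j; simpl; [lra |]; pose proof (cond_pos_sum u j Hu); lra.
Qed.

Lemma Series_nonneg (u : nat -> R) : (forall n, 0 <= u n) -> ex_series u -> 0 <= Series u.
Proof. intros Hu Hex; eapply Rle_trans; [apply (Hu 0%nat) | apply (term_le_Series u 0 Hu Hex)]. Qed.

Lemma ex_series_of_bounded_sums (u : nat -> R) B :
  (forall n, 0 <= u n) -> (forall N, sum_f_R0 u N <= B) -> ex_series u /\ Series u <= B.
Proof.
  intros Hu HB.
  assert (Hgrow : Un_growing (sum_f_R0 u)) by (intros n; simpl; specialize (Hu (S n)); lra).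
  assert (Hub : has_ub (sum_f_R0 u)) by (exists B; intros x [n ->]; auto).
  destruct (growing_cv _ Hgrow Hub) as [l Hl].
  assert (His : is_series u l) by (apply is_series_Reals; exact Hl).
  split; [exists l; exact His |].
  rewrite (is_series_unique u l His).
  apply Rnot_lt_le; intros HBl.
  destruct (Hl (l - B)) as [N HN]; [lra |].
  specialize (HN N (le_n _)); specialize (HB N).
  unfold Rdist in HN; apply Rabs_def2 in HN; lra.
Qed.

Lemma sum_f_R0_prefix_le (u : nat -> R) n m :
  (forall i, 0 <= u i) -> (n <= m)%nat -> sum_f_R0 u n <= sum_f_R0 u m.
Proof. intros Hu Hnm; induction Hnm; simpl; [lra | specialize (Hu (S m)); lra]. Qed.

Lemma sum_f_R0_window_le (u : nat -> R) s n :
  (forall i, 0 <= u i) -> sum_f_R0 (fun r => u (s + r)%nat) n <= sum_f_R0 u (s + n).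
Proof.
  intros Hu; induction n; simpl.
  - rewrite Nat.add_0_r; destruct s; simpl; [lra |].
    pose proof (cond_pos_sum u s Hu); lra.
  - replace (s + S n)%nat with (S (s + n)) by lia; simpl; lra.
Qed.

Lemma sum_f_R0_zero_tail (u : nat -> R) n m :
  (forall i, (n < i <= m)%nat -> u i = 0) -> (n <= m)%nat -> sum_f_R0 u m = sum_f_R0 u n.
Proof.
  intros Hu Hnm; induction Hnm as [| m Hnm IH]; auto.
  simpl; rewrite IH by (intros; apply Hu; lia); rewrite Hu by lia; ring.
Qed.

Lemma sum_f_R0_truncated_le (u : nat -> R) l N :
  (forall n, 0 <= u n) -> sum_f_R0 (fun n => if Nat.leb n l then u n else 0) N <= sum_f_R0 u l.
Proof.
  intros Hu; destruct (Nat.le_gt_cases N l).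
  - rewrite (sum_eq _ u) by (intros n Hn; destruct (Nat.leb_spec n l); [reflexivity | lia]).
    apply sum_f_R0_prefix_le; auto.
  - rewrite (sum_f_R0_zero_tail _ l N); [| | lia].
    + right; apply sum_eq; intros n Hn; destruct (Nat.leb_spec n l); [reflexivity | lia].
    + intros n Hn; destruct (Nat.leb_spec n l); [lia | reflexivity].
Qed.

Lemma sum_f_R0_mult_l (c : R) (u : nat -> R) N :
  sum_f_R0 (fun r => c * u r) N = c * sum_f_R0 u N.
Proof. induction N; simpl; auto; rewrite IHN; ring. Qed.

Lemma sum_f_R0_exchange (u : nat -> nat -> R) n m :
  sum_f_R0 (fun i => sum_f_R0 (fun j => u i j) m) n
  = sum_f_R0 (fun j => sum_f_R0 (fun i => u i j) n) m.
Proof. induction n; simpl; [reflexivity | rewrite IHn, <- sum_plus; reflexivity]. Qed.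

Lemma sum_f_R0_Series_exchange (c : nat -> R) (u : nat -> nat -> R) N :
  (forall n, ex_series (u n)) ->
  ex_series (fun m => sum_f_R0 (fun n => c n * u n m) N) /\
  sum_f_R0 (fun n => c n * Series (u n)) N = Series (fun m => sum_f_R0 (fun n => c n * u n m) N).
Proof.
  intros Hu; induction N as [| N [IHex IHeq]]; simpl.
  - split; [apply ex_series_mult_l, Hu | symmetry; apply Series_scal_l].
  - assert (Hex : ex_series (fun m => c (S N) * u (S N) m)) by apply ex_series_mult_l, Hu.
    split; [apply (ex_series_Rplus _ _ IHex Hex) |].
    rewrite Series_plus, Series_scal_l, IHeq; auto.
Qed.

Lemma geometric_quarter_sum_le K : sum_f_R0 (fun k => (/4) ^ k) K <= 2.
Proof.
  assert (H : sum_f_R0 (fun k => (/4) ^ k) K <= 2 - (/4) ^ K).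
  { induction K; simpl; [lra |]; pose proof (pow_le (/4) K ltac:(lra)); lra. }
  pose proof (pow_le (/4) K ltac:(lra)); lra.
Qed.

Lemma pow4_unbounded B : exists k, B < 4 ^ k.
Proof.
  assert (Hlt : forall n, INR n < 4 ^ n).
  { induction n; [simpl; lra |]; rewrite S_INR; simpl.
    pose proof (pow_R1_Rle 4 n ltac:(lra)); lra. }
  destruct (archimed B) as [HB _]; exists (Z.to_nat (up B)).
  assert (IZR (up B) <= INR (Z.to_nat (up B))) by (rewrite INR_IZR_INZ; apply IZR_le; lia).
  pose proof (Hlt (Z.to_nat (up B))); lra.
Qed.

Definition Cnorm2 (z : Cx) : R := fst z ^ 2 + snd z ^ 2.
Definition Copp (z : Cx) : Cx := (- fst z, - snd z).
Definition Cminus (z w : Cx) : Cx := Cplus z (Copp w).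

Lemma Cx_eq (z w : Cx) : fst z = fst w -> snd z = snd w -> z = w.
Proof. destruct z, w; simpl; intros; subst; auto. Qed.

Lemma Cplus_C0 z : Cplus z C0 = z.
Proof. apply Cx_eq; unfold Cplus, C0; simpl; ring. Qed.

Lemma Cmult_C0_l z : Cmult C0 z = C0.
Proof. apply Cx_eq; unfold Cmult, C0; simpl; ring. Qed.

Lemma Cnorm2_ge0 z : 0 <= Cnorm2 z.
Proof. unfold Cnorm2; nra. Qed.

Lemma Cnorm2_C0 : Cnorm2 C0 = 0.
Proof. unfold Cnorm2, C0; simpl; ring. Qed.

Lemma Cnorm2_eq0 z : Cnorm2 z = 0 -> z = C0.
Proof.
  destruct z as [p q]; unfold Cnorm2; cbn [fst snd]; intros H.
  assert (p = 0) by nra; assert (q = 0) by nra; subst; reflexivity.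
Qed.

Lemma Cnorm2_mult z w : Cnorm2 (Cmult z w) = Cnorm2 z * Cnorm2 w.
Proof. unfold Cnorm2, Cmult; simpl; ring. Qed.

Lemma Cnorm2_RtoC_mult c z : Cnorm2 (Cmult (RtoC c) z) = c ^ 2 * Cnorm2 z.
Proof. rewrite Cnorm2_mult; unfold Cnorm2, RtoC; simpl; ring. Qed.

Lemma Cnorm2_Cconj z : Cnorm2 (Cconj z) = Cnorm2 z.
Proof. unfold Cnorm2, Cconj; simpl; ring. Qed.

Lemma Cnorm2_Cplus_le z w : Cnorm2 (Cplus z w) <= 2 * Cnorm2 z + 2 * Cnorm2 w.
Proof.
  unfold Cnorm2, Cplus; simpl.
  pose proof (pow2_ge_0 (fst z - fst w)); pose proof (pow2_ge_0 (snd z - snd w)); nra.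
Qed.

Lemma Cnorm2_Cminus_sym z w : Cnorm2 (Cminus z w) = Cnorm2 (Cminus w z).
Proof. unfold Cnorm2, Cminus, Copp, Cplus; simpl; ring. Qed.

Lemma Cnorm2_le_Cminus z w : Cnorm2 w <= 2 * Cnorm2 z + 2 * Cnorm2 (Cminus z w).
Proof.
  destruct z as [p q], w as [p' q']; unfold Cnorm2, Cminus, Copp, Cplus; cbn [fst snd].
  pose proof (pow2_ge_0 (2 * p - p')); pose proof (pow2_ge_0 (2 * q - q')); nra.
Qed.

Lemma Cnorm2_Cminus_fst z w : (fst z - fst w) ^ 2 <= Cnorm2 (Cminus z w).
Proof.
  destruct z as [p q], w as [p' q']; unfold Cnorm2, Cminus, Copp, Cplus; cbn [fst snd].
  pose proof (pow2_ge_0 (q + - q')); replace (p - p') with (p + - p') by ring; lra.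
Qed.

Lemma Cnorm2_Cminus_snd z w : (snd z - snd w) ^ 2 <= Cnorm2 (Cminus z w).
Proof.
  destruct z as [p q], w as [p' q']; unfold Cnorm2, Cminus, Copp, Cplus; cbn [fst snd].
  pose proof (pow2_ge_0 (p + - p')); replace (q - q') with (q + - q') by ring; lra.
Qed.

Lemma Cmod_sq z : Cmod z ^ 2 = Cnorm2 z.
Proof. unfold Cmod; rewrite pow2_sqrt; [reflexivity | apply Cnorm2_ge0]. Qed.

Lemma Cmod_ge0 z : 0 <= Cmod z.
Proof. apply sqrt_pos. Qed.

Lemma Cmult_Cconj_l z : Cmult (Cconj z) z = (Cnorm2 z, 0).
Proof. apply Cx_eq; unfold Cmult, Cconj, Cnorm2; simpl; ring. Qed.

(* AM-GM with weight [t]. *)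
Lemma Re_Cmult_le (t : R) z w : 0 < t -> fst (Cmult z w) <= (t * Cnorm2 z + Cnorm2 w / t) / 2.
Proof.
  intros Ht; destruct z as [x y], w as [x' y']; unfold Cmult, Cnorm2; cbn [fst snd].
  assert (H : 2 * t * (x * x' - y * y') <= t * t * (x ^ 2 + y ^ 2) + (x' ^ 2 + y' ^ 2)).
  { pose proof (pow2_ge_0 (t * x - x')); pose proof (pow2_ge_0 (t * y + y')); nra. }
  apply (Rmult_le_reg_l (2 * t)); [lra |]; field_simplify; [nra | lra].
Qed.

Lemma fst_Csum g n : fst (Csum g n) = sum_f_R0 (fun i => fst (g i)) n.
Proof. induction n; simpl; auto; rewrite IHn; reflexivity. Qed.

Lemma snd_Csum g n : snd (Csum g n) = sum_f_R0 (fun i => snd (g i)) n.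
Proof. induction n; simpl; auto; rewrite IHn; reflexivity. Qed.

Lemma Csum_ext g h n : (forall i, (i <= n)%nat -> g i = h i) -> Csum g n = Csum h n.
Proof.
  induction n; intros H; simpl; [apply H; lia |].
  rewrite IHn by (intros; apply H; lia); rewrite H by lia; reflexivity.
Qed.

Lemma Csum_zero_tail g n m :
  (forall i, (n < i <= m)%nat -> g i = C0) -> (n <= m)%nat -> Csum g m = Csum g n.
Proof.
  intros H Hnm; induction Hnm as [| m Hnm IH]; auto.
  simpl; rewrite IH by (intros; apply H; lia); rewrite H by lia; apply Cplus_C0.
Qed.

Lemma Csum_zero_head g r : (forall i, (i < r)%nat -> g i = C0) -> Csum g r = g r.
Proof.
  induction r; intros H; simpl; auto.
  rewrite IHr by (intros; apply H; lia); rewrite H by lia.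
  apply Cx_eq; unfold Cplus, C0; simpl; ring.
Qed.

Lemma Csum_shift g r m :
  (forall i, (i < r)%nat -> g i = C0) -> Csum (fun n => g (r + n)%nat) m = Csum g (r + m).
Proof.
  intros H; induction m; simpl.
  - rewrite Nat.add_0_r; symmetry; apply Csum_zero_head; auto.
  - rewrite IHm; replace (r + S m)%nat with (S (r + m)) by lia; reflexivity.
Qed.

Lemma Csum_mult_l c g n : Cmult c (Csum g n) = Csum (fun i => Cmult c (g i)) n.
Proof.
  induction n; simpl; auto.
  rewrite <- IHn; apply Cx_eq; unfold Cmult, Cplus; simpl; ring.
Qed.

Lemma Csum_exchange (g : nat -> nat -> Cx) n m :
  Csum (fun i => Csum (fun j => g i j) m) n = Csum (fun j => Csum (fun i => g i j) n) m.
Proof.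
  apply Cx_eq; [rewrite !fst_Csum | rewrite !snd_Csum].
  - rewrite (sum_eq _ (fun i => sum_f_R0 (fun j => fst (g i j)) m)) by (intros; apply fst_Csum).
    rewrite sum_f_R0_exchange; apply sum_eq; intros; rewrite fst_Csum; reflexivity.
  - rewrite (sum_eq _ (fun i => sum_f_R0 (fun j => snd (g i j)) m)) by (intros; apply snd_Csum).
    rewrite sum_f_R0_exchange; apply sum_eq; intros; rewrite snd_Csum; reflexivity.
Qed.

(** * The Hilbert space [l^2] *)

Definition l2 := {u : nat -> Cx | ex_series (fun n => Cnorm2 (u n))}.

Definition l2norm2 (x : l2) : R := Series (fun n => Cnorm2 (proj1_sig x n)).

Lemma l2_ext (x y : l2) : (forall n, proj1_sig x n = proj1_sig y n) -> x = y.
Proof.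
  destruct x as [x px], y as [y py]; simpl; intros H.
  assert (x = y) by (apply functional_extensionality; auto); subst.
  f_equal; apply proof_irrelevance.
Qed.

Lemma l2norm2_ge0 (x : l2) : 0 <= l2norm2 x.
Proof. apply Series_nonneg; [intros; apply Cnorm2_ge0 | apply (proj2_sig x)]. Qed.

Definition l2zero : l2.
Proof.
  exists (fun _ => C0); apply (ex_series_le_nonneg _ (fun _ => 0)).
  - intros; rewrite Cnorm2_C0; lra.
  - exists 0; apply is_series_Reals; intros e He; exists 0%nat; intros.
    unfold Rdist; rewrite sum_cte, Rmult_0_l, Rminus_0_r, Rabs_R0; lra.
Defined.

Definition l2add (x y : l2) : l2.
Proof.
  exists (fun n => Cplus (proj1_sig x n) (proj1_sig y n)).
  apply (ex_series_le_nonneg _ (fun n => 2 * Cnorm2 (proj1_sig x n) + 2 * Cnorm2 (proj1_sig y n))).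
  - intros n; split; [apply Cnorm2_ge0 | apply Cnorm2_Cplus_le].
  - apply ex_series_Rplus; apply ex_series_mult_l; [apply (proj2_sig x) | apply (proj2_sig y)].
Defined.

Definition l2opp (x : l2) : l2.
Proof.
  exists (fun n => Copp (proj1_sig x n)).
  apply (ex_series_le_nonneg _ (fun n => Cnorm2 (proj1_sig x n))); [| apply (proj2_sig x)].
  intros n; split; [apply Cnorm2_ge0 | unfold Cnorm2, Copp; simpl; right; ring].
Defined.

Definition l2scal (c : Cx) (x : l2) : l2.
Proof.
  exists (fun n => Cmult c (proj1_sig x n)).
  apply (ex_series_le_nonneg _ (fun n => Cnorm2 c * Cnorm2 (proj1_sig x n))).
  - intros n; split; [apply Cnorm2_ge0 | rewrite Cnorm2_mult; lra].
  - apply ex_series_mult_l, (proj2_sig x).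
Defined.

Definition inner_re (x y : nat -> Cx) (n : nat) : R := fst (x n) * fst (y n) + snd (x n) * snd (y n).
Definition inner_im (x y : nat -> Cx) (n : nat) : R := snd (x n) * fst (y n) - fst (x n) * snd (y n).

Lemma Rabs_mul_add_le p q p' q' : Rabs (p * p' + q * q') <= (p ^ 2 + q ^ 2) + (p' ^ 2 + q' ^ 2).
Proof.
  apply Rabs_le; pose proof (pow2_ge_0 (p + p')); pose proof (pow2_ge_0 (p - p')).
  pose proof (pow2_ge_0 (q + q')); pose proof (pow2_ge_0 (q - q')); split; nra.
Qed.

Lemma ex_series_inner_re (x y : l2) : ex_series (inner_re (proj1_sig x) (proj1_sig y)).
Proof.
  apply (ex_series_Rabs_le _ (fun n => Cnorm2 (proj1_sig x n) + Cnorm2 (proj1_sig y n))).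
  - intros n; apply Rabs_mul_add_le.
  - apply ex_series_Rplus; [apply (proj2_sig x) | apply (proj2_sig y)].
Qed.

Lemma ex_series_inner_im (x y : l2) : ex_series (inner_im (proj1_sig x) (proj1_sig y)).
Proof.
  apply (ex_series_Rabs_le _ (fun n => Cnorm2 (proj1_sig x n) + Cnorm2 (proj1_sig y n))).
  - intros n; unfold inner_im.
    replace (Cnorm2 (proj1_sig y n)) with ((fst (proj1_sig y n)) ^ 2 + (- snd (proj1_sig y n)) ^ 2)
      by (unfold Cnorm2; ring).
    replace (Cnorm2 (proj1_sig x n)) with ((snd (proj1_sig x n)) ^ 2 + (fst (proj1_sig x n)) ^ 2)
      by (unfold Cnorm2; ring).
    replace (_ - _) with (snd (proj1_sig x n) * fst (proj1_sig y n)
                          + fst (proj1_sig x n) * - snd (proj1_sig y n)) by ring.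
    apply Rabs_mul_add_le.
  - apply ex_series_Rplus; [apply (proj2_sig x) | apply (proj2_sig y)].
Qed.

Definition l2inner (x y : l2) : Cx :=
  (Series (inner_re (proj1_sig x) (proj1_sig y)), Series (inner_im (proj1_sig x) (proj1_sig y))).

Lemma l2_add_assoc (x y z : l2) : l2add x (l2add y z) = l2add (l2add x y) z.
Proof. apply l2_ext; intros n; simpl; unfold Cplus; simpl; f_equal; ring. Qed.

Lemma l2_add_comm (x y : l2) : l2add x y = l2add y x.
Proof. apply l2_ext; intros n; simpl; unfold Cplus; simpl; f_equal; ring. Qed.

Lemma l2_add_zero (x : l2) : l2add x l2zero = x.
Proof. apply l2_ext; intros n; simpl; apply Cplus_C0. Qed.

Lemma l2_add_opp (x : l2) : l2add x (l2opp x) = l2zero.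
Proof. apply l2_ext; intros n; simpl; unfold Cplus, Copp, C0; simpl; f_equal; ring. Qed.

Lemma l2_scal_one (x : l2) : l2scal C1 x = x.
Proof. apply l2_ext; intros n; simpl; apply Cx_eq; unfold Cmult, C1; simpl; ring. Qed.

Lemma l2_scal_assoc a b (x : l2) : l2scal a (l2scal b x) = l2scal (Cmult a b) x.
Proof. apply l2_ext; intros n; simpl; unfold Cmult; simpl; f_equal; ring. Qed.

Lemma l2_scal_distr_l a (x y : l2) : l2scal a (l2add x y) = l2add (l2scal a x) (l2scal a y).
Proof. apply l2_ext; intros n; simpl; unfold Cmult, Cplus; simpl; f_equal; ring. Qed.

Lemma l2_scal_distr_r a b (x : l2) : l2scal (Cplus a b) x = l2add (l2scal a x) (l2scal b x).
Proof. apply l2_ext; intros n; simpl; unfold Cmult, Cplus; simpl; f_equal; ring. Qed.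

Lemma l2inner_add_l (x y z : l2) : l2inner (l2add x y) z = Cplus (l2inner x z) (l2inner y z).
Proof.
  unfold l2inner, Cplus; simpl; f_equal.
  - rewrite <- Series_plus by apply ex_series_inner_re.
    apply Series_ext; intros n; unfold inner_re, Cplus; simpl; ring.
  - rewrite <- Series_plus by apply ex_series_inner_im.
    apply Series_ext; intros n; unfold inner_im, Cplus; simpl; ring.
Qed.

Lemma l2inner_scal_l a (x y : l2) : l2inner (l2scal a x) y = Cmult a (l2inner x y).
Proof.
  unfold l2inner, Cmult; simpl; f_equal.
  - rewrite <- Series_scal_l, <- Series_scal_l, <- Series_minus;
      [| apply ex_series_mult_l, ex_series_inner_re
       | apply ex_series_mult_l, ex_series_inner_im].
    apply Series_ext; intros n; unfold inner_re, inner_im, Cmult; simpl; ring.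
  - rewrite <- Series_scal_l, <- Series_scal_l, <- Series_plus;
      [| apply ex_series_mult_l, ex_series_inner_im
       | apply ex_series_mult_l, ex_series_inner_re].
    apply Series_ext; intros n; unfold inner_re, inner_im, Cmult; simpl; ring.
Qed.

Lemma l2inner_conj (x y : l2) : l2inner y x = Cconj (l2inner x y).
Proof.
  unfold l2inner, Cconj; simpl; f_equal.
  - apply Series_ext; intros n; unfold inner_re; ring.
  - rewrite <- Series_opp; apply Series_ext; intros n; unfold inner_im; ring.
Qed.

Lemma Re_l2inner_self (x : l2) : Re (l2inner x x) = l2norm2 x.
Proof. apply Series_ext; intros n; unfold inner_re, Cnorm2; ring. Qed.

Lemma l2inner_self_ge0 (x : l2) : 0 <= Re (l2inner x x).
Proof. rewrite Re_l2inner_self; apply l2norm2_ge0. Qed.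

Lemma l2inner_self_eq0 (x : l2) : l2inner x x = C0 -> x = l2zero.
Proof.
  intros H; assert (H0 : l2norm2 x = 0) by (rewrite <- Re_l2inner_self, H; reflexivity).
  apply l2_ext; intros n; simpl; apply Cnorm2_eq0.
  pose proof (term_le_Series _ n (fun _ => Cnorm2_ge0 _) (proj2_sig x)).
  pose proof (Cnorm2_ge0 (proj1_sig x n)); unfold l2norm2 in H0; lra.
Qed.

Lemma Un_cv_sq_sub (u : nat -> R) l c : Un_cv u l -> Un_cv (fun n => (c - u n) ^ 2) ((c - l) ^ 2).
Proof.
  intros Hu; assert (Hd : Un_cv (fun n => c - u n) (c - l)).
  { apply CV_minus; [intros e He; exists 0%nat; intros; unfold Rdist; rewrite Rminus_diag, Rabs_R0; lra | auto]. }
  intros e He; destruct (CV_mult _ _ _ _ Hd Hd e He) as [N HN]; exists N; intros n Hn.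
  specialize (HN n Hn); unfold Rdist in *; simpl; rewrite !Rmult_1_r; exact HN.
Qed.

Lemma Un_cv_Cnorm2_Cminus (u : nat -> Cx) (l z : Cx) :
  Un_cv (fun n => fst (u n)) (fst l) -> Un_cv (fun n => snd (u n)) (snd l) ->
  Un_cv (fun n => Cnorm2 (Cminus z (u n))) (Cnorm2 (Cminus z l)).
Proof.
  intros H1 H2; unfold Cnorm2, Cminus, Copp, Cplus; cbn [fst snd].
  pose proof (CV_plus _ _ _ _ (Un_cv_sq_sub _ _ (fst z) H1) (Un_cv_sq_sub _ _ (snd z) H2)) as H.
  intros e He; destruct (H e He) as [N HN]; exists N; intros n Hn.
  specialize (HN n Hn); unfold Rdist in *.
  replace ((fst z + - fst (u n)) ^ 2 + (snd z + - snd (u n)) ^ 2 - ((fst z + - fst l) ^ 2 + (snd z + - snd l) ^ 2))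
    with ((fst z - fst (u n)) ^ 2 + (snd z - snd (u n)) ^ 2 - ((fst z - fst l) ^ 2 + (snd z - snd l) ^ 2))
    by ring; exact HN.
Qed.

Lemma Un_cv_le_eventually (u : nat -> R) l B N :
  (forall n, (n >= N)%nat -> u n <= B) -> Un_cv u l -> l <= B.
Proof.
  intros HB Hu; apply Rnot_lt_le; intros HBl.
  destruct (Hu (l - B)) as [M HM]; [lra |].
  specialize (HM (max M N) ltac:(lia)); specialize (HB (max M N) ltac:(lia)).
  unfold Rdist in HM; apply Rabs_def2 in HM; lra.
Qed.

Section L2Complete.

Variable s : nat -> l2.
Let u m := proj1_sig (s m).

Hypothesis s_cauchy : forall eps, eps > 0 -> exists N, forall m n, (m >= N)%nat -> (n >= N)%nat ->
  Series (fun j => Cnorm2 (Cminus (u m j) (u n j))) < eps * eps.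

Lemma l2_diff_ex_series m n : ex_series (fun j => Cnorm2 (Cminus (u m j) (u n j))).
Proof. exact (proj2_sig (l2add (s m) (l2opp (s n)))). Qed.

Lemma l2_cauchy_coord eps : eps > 0 -> exists N, forall m n, (m >= N)%nat -> (n >= N)%nat ->
  forall j, Cnorm2 (Cminus (u m j) (u n j)) < eps * eps.
Proof.
  intros He; destruct (s_cauchy eps He) as [N HN]; exists N; intros m n Hm Hn j.
  eapply Rle_lt_trans; [| exact (HN m n Hm Hn)].
  apply (term_le_Series (fun j => Cnorm2 (Cminus (u m j) (u n j))));
    [intros; apply Cnorm2_ge0 | apply l2_diff_ex_series].
Qed.

Lemma l2_cauchy_fst j : Cauchy_crit (fun m => fst (u m j)).
Proof.
  intros e He; destruct (l2_cauchy_coord e He) as [N HN]; exists N; intros n m Hn Hm.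
  unfold Rdist; pose proof (Cnorm2_Cminus_fst (u n j) (u m j)); pose proof (HN n m Hn Hm j).
  apply Rabs_def1; nra.
Qed.

Lemma l2_cauchy_snd j : Cauchy_crit (fun m => snd (u m j)).
Proof.
  intros e He; destruct (l2_cauchy_coord e He) as [N HN]; exists N; intros n m Hn Hm.
  unfold Rdist; pose proof (Cnorm2_Cminus_snd (u n j) (u m j)); pose proof (HN n m Hn Hm j).
  apply Rabs_def1; nra.
Qed.

Let lim j : Cx :=
  (proj1_sig (Rcomplete.R_complete _ (l2_cauchy_fst j)),
   proj1_sig (Rcomplete.R_complete _ (l2_cauchy_snd j))).

Lemma l2_limit_tail eps : eps > 0 -> exists N, forall m, (m >= N)%nat ->
  ex_series (fun j => Cnorm2 (Cminus (u m j) (lim j)))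
  /\ Series (fun j => Cnorm2 (Cminus (u m j) (lim j))) <= eps * eps.
Proof.
  intros He; destruct (s_cauchy eps He) as [N HN]; exists N; intros m Hm.
  apply ex_series_of_bounded_sums; [intros; apply Cnorm2_ge0 |]; intros J.
  assert (Hcv : Un_cv (fun n => sum_f_R0 (fun j => Cnorm2 (Cminus (u m j) (u n j))) J)
                      (sum_f_R0 (fun j => Cnorm2 (Cminus (u m j) (lim j))) J)).
  { induction J; simpl; [| apply CV_plus; auto];
      apply Un_cv_Cnorm2_Cminus; apply (proj2_sig (Rcomplete.R_complete _ _)). }
  refine (Un_cv_le_eventually _ _ _ N _ Hcv); intros n Hn.
  left; eapply Rle_lt_trans; [| exact (HN m n Hm Hn)].
  apply sum_f_R0_le_Series; [intros; apply Cnorm2_ge0 | apply l2_diff_ex_series].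
Qed.

Lemma l2_limit_in_l2 : ex_series (fun j => Cnorm2 (lim j)).
Proof.
  destruct (l2_limit_tail 1 ltac:(lra)) as [N HN]; destruct (HN N (le_n _)) as [Hex _].
  apply (ex_series_le_nonneg _ (fun j => 2 * Cnorm2 (u N j) + 2 * Cnorm2 (Cminus (u N j) (lim j)))).
  - intros j; split; [apply Cnorm2_ge0 | apply Cnorm2_le_Cminus].
  - apply ex_series_Rplus; apply ex_series_mult_l; auto; apply (proj2_sig (s N)).
Qed.

Lemma l2_cauchy_cv : exists l : l2, forall eps, eps > 0 -> exists N, forall n, (n >= N)%nat ->
  l2norm2 (l2add (s n) (l2opp l)) < eps * eps.
Proof.
  exists (exist _ lim l2_limit_in_l2); intros eps He.
  destruct (l2_limit_tail (eps / 2) ltac:(lra)) as [N HN]; exists N; intros n Hn.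
  destruct (HN n Hn) as [_ Hle]; unfold l2norm2; simpl; fold (u n).
  eapply Rle_lt_trans; [exact Hle | nra].
Qed.

End L2Complete.

Lemma l2_complete : forall s : nat -> l2,
  (forall eps, eps > 0 -> exists N, forall m n, (m >= N)%nat -> (n >= N)%nat ->
     sqrt (Re (l2inner (l2add (s m) (l2opp (s n))) (l2add (s m) (l2opp (s n))))) < eps) ->
  exists l, forall eps, eps > 0 -> exists N, forall n, (n >= N)%nat ->
     sqrt (Re (l2inner (l2add (s n) (l2opp l)) (l2add (s n) (l2opp l)))) < eps.
Proof.
  intros s Hs; destruct (l2_cauchy_cv s) as [l Hl].
  - intros eps He; destruct (Hs eps He) as [N HN]; exists N; intros m n Hm Hn.
    specialize (HN m n Hm Hn); rewrite Re_l2inner_self in HN.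
    pose proof (l2norm2_ge0 (l2add (s m) (l2opp (s n)))).
    apply sqrt_lt_0_alt; rewrite sqrt_square by lra; exact HN.
  - exists l; intros eps He; destruct (Hl eps He) as [N HN]; exists N; intros n Hn.
    rewrite Re_l2inner_self, <- (sqrt_square eps) by lra.
    apply sqrt_lt_1; [apply l2norm2_ge0 | nra | apply HN, Hn].
Qed.

Definition L2 : HilbertSpace :=
  {| Hcar := l2; Hzero := l2zero; Hadd := l2add; Hopp := l2opp; Hscal := l2scal; Hinner := l2inner;
     Hadd_assoc := l2_add_assoc; Hadd_comm := l2_add_comm; Hadd_zero := l2_add_zero;
     Hadd_opp := l2_add_opp; Hscal_one := l2_scal_one; Hscal_assoc := l2_scal_assoc;
     Hscal_distr_l := l2_scal_distr_l; Hscal_distr_r := l2_scal_distr_r;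
     Hinner_add_l := l2inner_add_l; Hinner_scal_l := l2inner_scal_l; Hinner_conj := l2inner_conj;
     Hinner_pos := l2inner_self_ge0; Hinner_def := l2inner_self_eq0; Hcomplete := l2_complete |}.

Lemma Hnorm_L2_sq (x : L2) : Hnorm x ^ 2 = l2norm2 x.
Proof. unfold Hnorm; rewrite pow2_sqrt by apply l2inner_self_ge0; apply Re_l2inner_self. Qed.

Lemma l2norm2_le_sub (x l : l2) : l2norm2 x <= 2 * l2norm2 l + 2 * l2norm2 (l2add x (l2opp l)).
Proof.
  unfold l2norm2; rewrite <- !Series_scal_l, <- Series_plus;
    [| apply ex_series_mult_l, (proj2_sig l) | apply ex_series_mult_l, (proj2_sig (l2add x (l2opp l)))].
  apply Series_le.
  - intros j; split; [apply Cnorm2_ge0 |]; simpl; fold (Cminus (proj1_sig x j) (proj1_sig l j)).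
    rewrite Cnorm2_Cminus_sym; apply Cnorm2_le_Cminus.
  - apply ex_series_Rplus; apply ex_series_mult_l; [apply (proj2_sig l) | apply (proj2_sig (l2add x (l2opp l)))].
Qed.

Lemma Hseries_converges_L2_bounded (g : nat -> L2) :
  Hseries_converges g -> exists B N, forall n, (n >= N)%nat -> l2norm2 (Hpsum g n) <= B.
Proof.
  intros [l Hl]; destruct (Hl 1 ltac:(lra)) as [N HN]; exists (2 * l2norm2 l + 2), N; intros n Hn.
  specialize (HN n Hn); eapply Rle_trans; [apply (l2norm2_le_sub _ l) |].
  assert (0 <= Hnorm (Hadd (Hpsum g n) (Hopp l))) by apply sqrt_pos.
  assert (Hd : Hnorm (Hadd (Hpsum g n) (Hopp l)) ^ 2 <= 1) by nra.
  rewrite Hnorm_L2_sq in Hd; simpl in Hd; lra.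
Qed.

Lemma Hpsum_L2_coord (g : nat -> L2) m j : proj1_sig (Hpsum g m) j = Csum (fun n => proj1_sig (g n) j) m.
Proof. induction m; simpl; auto; rewrite <- IHm; reflexivity. Qed.

(** * Duality for finite sections of the Nörlund matrix *)

Definition sum_Cnorm2 (v : nat -> Cx) (K : nat) : R := sum_f_R0 (fun r => Cnorm2 (v r)) K.

(* The [r]-th entry of [N_a^T v], for [v] supported in [[0, K]]. *)
Definition norlund_transpose (a v : nat -> Cx) (K r : nat) : Cx :=
  Csum (fun i => Cmult (norlund_entry a i r) (v i)) K.

Lemma sum_Cnorm2_ge0 v K : 0 <= sum_Cnorm2 v K.
Proof. apply cond_pos_sum; intros; apply Cnorm2_ge0. Qed.

Lemma norlund_entry_above_diag a i j : (i < j)%nat -> norlund_entry a i j = C0.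
Proof. intros H; unfold norlund_entry; destruct (Nat.leb_spec j i); [lia | reflexivity]. Qed.

Lemma sum_Cnorm2_norlund_apply a u K :
  let v i := if Nat.leb i K then Cconj (norlund_apply a u i) else C0 in
  sum_Cnorm2 (norlund_apply a u) K
  = sum_f_R0 (fun j => fst (Cmult (u j) (norlund_transpose a v K j))) K.
Proof.
  intros v; unfold sum_Cnorm2; rewrite <- fst_Csum.
  rewrite (Csum_ext _ (fun j => Csum (fun i => Cmult (v i) (Cmult (norlund_entry a i j) (u j))) K)).
  2:{ intros j _; unfold norlund_transpose; rewrite Csum_mult_l; apply Csum_ext; intros i _.
      apply Cx_eq; unfold Cmult; simpl; ring. }
  rewrite <- Csum_exchange.
  rewrite (Csum_ext _ (fun i => Cmult (Cconj (norlund_apply a u i)) (norlund_apply a u i))).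
  - rewrite fst_Csum; apply sum_eq; intros i _; rewrite Cmult_Cconj_l; reflexivity.
  - intros i Hi; rewrite <- Csum_mult_l; unfold v.
    destruct (Nat.leb_spec i K); [| lia]; f_equal.
    unfold norlund_apply; apply Csum_zero_tail; auto.
    intros j Hj; rewrite norlund_entry_above_diag by lia; apply Cmult_C0_l.
Qed.

Lemma norlund_unbounded_witness a D : ~ norlund_bounded a -> 0 < D ->
  exists u M K, (forall n, (n >= M)%nat -> u n = C0) /\
    D * sum_Cnorm2 u M < sum_Cnorm2 (norlund_apply a u) K.
Proof.
  intros Hnb HD; apply NNPP; intros Hno; apply Hnb; exists (sqrt D); intros u M Hu K.
  apply Rnot_lt_le; intros Hlt; apply Hno; exists u, M, K; split; auto.
  assert (Cmod_sum : forall w L, sum_f_R0 (fun i => Cmod (w i) ^ 2) L = sum_Cnorm2 w L)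
    by (intros; apply sum_eq; intros; apply Cmod_sq).
  rewrite !Cmod_sum in Hlt.
  rewrite <- sqrt_mult_alt in Hlt by lra; apply sqrt_lt_0_alt in Hlt; exact Hlt.
Qed.

(* If [N_a] has norm [> sqrt D] then [N_a^T] has norm [>= sqrt D] on some finite section:
   pair [|N_a u|^2] against [v = conj (N_a u)] and use AM-GM with weight [D]. *)
Lemma norlund_transpose_unbounded a D : ~ norlund_bounded a -> 0 < D ->
  exists K v, 0 < sum_Cnorm2 v K /\ D * sum_Cnorm2 v K <= sum_Cnorm2 (norlund_transpose a v K) K.
Proof.
  intros Hnb HD; destruct (norlund_unbounded_witness a D Hnb HD) as [u [M [K [Hu Hlt]]]].
  set (X := sum_Cnorm2 (norlund_apply a u) K) in *; set (U := sum_Cnorm2 u M) in *.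
  set (v i := if Nat.leb i K then Cconj (norlund_apply a u i) else C0).
  set (Y := sum_Cnorm2 (norlund_transpose a v K) K).
  assert (Xv : sum_Cnorm2 v K = X).
  { apply sum_eq; intros i Hi; unfold v; destruct (Nat.leb_spec i K); [apply Cnorm2_Cconj | lia]. }
  assert (HuK : sum_Cnorm2 u K <= U).
  { unfold U, sum_Cnorm2; destruct (Nat.le_gt_cases K M).
    - apply sum_f_R0_prefix_le; auto; intros; apply Cnorm2_ge0.
    - rewrite (sum_f_R0_zero_tail _ M K); [lra | | lia].
      intros i Hi; rewrite Hu by lia; apply Cnorm2_C0. }
  assert (HXY : X <= (D * U + Y / D) / 2).
  { unfold X; rewrite sum_Cnorm2_norlund_apply; fold v.
    eapply Rle_trans; [apply sum_Rle; intros j _; apply (Re_Cmult_le D); auto |].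
    rewrite (sum_eq _ (fun j => / 2 * (D * Cnorm2 (u j) + / D * Cnorm2 (norlund_transpose a v K j))))
      by (intros; unfold Rdiv; ring).
    rewrite sum_f_R0_mult_l, sum_plus, !sum_f_R0_mult_l; fold (sum_Cnorm2 u K).
    change (sum_f_R0 (fun r => Cnorm2 (norlund_transpose a v K r)) K) with Y.
    pose proof (Rmult_le_compat_l D _ _ (Rlt_le _ _ HD) HuK); unfold Rdiv; lra. }
  assert (0 <= D * U) by (apply Rmult_le_pos; [lra | apply sum_Cnorm2_ge0]).
  exists K, v; rewrite Xv; fold Y; split; [lra |].
  apply Rnot_lt_le; intros HYX.
  assert (Y / D < X); [| lra].
  apply (Rmult_lt_reg_l D); [lra |]; replace (D * (Y / D)) with Y by (field; lra); lra.
Qed.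

(** * Cutting [N] into consecutive blocks and shifting inside the blocks *)

Section Blocks.

(* Block [k] consists of the [len k + 1] indices [block_start k + r], [r <= len k]. *)
Variable len : nat -> nat.

Fixpoint block_start (k : nat) : nat :=
  match k with O => O | S k => (block_start k + S (len k))%nat end.

Lemma block_start_mono k k' : (k <= k')%nat -> (block_start k <= block_start k')%nat.
Proof. intros H; induction H; simpl; lia. Qed.

Lemma block_start_ge k : (k <= block_start k)%nat.
Proof. induction k; simpl; lia. Qed.

Lemma block_of_ex j : exists k, (block_start k <= j < block_start (S k))%nat.
Proof.
  induction j as [| j [k Hk]]; [exists O; simpl; lia |].
  destruct (Nat.eq_dec (S j) (block_start (S k))); [exists (S k) | exists k]; simpl in *; lia.
Qed.

Definition block_of (j : nat) : nat := proj1_sig (constructive_indefinite_description _ (block_of_ex j)).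

Definition block_offset (j : nat) : nat := (j - block_start (block_of j))%nat.

Lemma block_of_spec j : (block_start (block_of j) <= j < block_start (S (block_of j)))%nat.
Proof. exact (proj2_sig (constructive_indefinite_description _ (block_of_ex j))). Qed.

Lemma block_of_ge k j : (block_start k <= j)%nat -> (k <= block_of j)%nat.
Proof.
  intros H; pose proof (block_of_spec j); destruct (Nat.le_gt_cases k (block_of j)); auto.
  pose proof (block_start_mono (S (block_of j)) k ltac:(lia)); lia.
Qed.

Lemma block_of_mono j j' : (j <= j')%nat -> (block_of j <= block_of j')%nat.
Proof. intros H; apply block_of_ge; pose proof (block_of_spec j); lia. Qed.

Lemma block_of_at k r : (r <= len k)%nat -> block_of (block_start k + r) = k.
Proof.
  intros Hr; pose proof (block_of_spec (block_start k + r)).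
  pose proof (block_of_ge k (block_start k + r) ltac:(lia)).
  destruct (Nat.eq_dec (block_of (block_start k + r)) k); auto.
  pose proof (block_start_mono (S k) (block_of (block_start k + r)) ltac:(lia)); simpl in *; lia.
Qed.

Lemma block_offset_at k r : (r <= len k)%nat -> block_offset (block_start k + r) = r.
Proof. intros Hr; unfold block_offset; rewrite block_of_at; lia. Qed.

Lemma block_offset_le j : (block_offset j <= j)%nat.
Proof. unfold block_offset; lia. Qed.

Lemma block_of_shift_iff j n : block_of (j + n) = block_of j <-> (n <= block_offset (j + n))%nat.
Proof.
  unfold block_offset; split.
  - intros E; rewrite E; pose proof (block_of_spec j); lia.
  - intros H; pose proof (block_of_spec (j + n)); pose proof (block_of_mono j (j + n) ltac:(lia)).
    pose proof (block_of_ge (block_of (j + n)) j ltac:(lia)); lia.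
Qed.

Lemma sum_f_R0_blocks (h : nat -> R) K :
  sum_f_R0 h (block_start (S K) - 1)
  = sum_f_R0 (fun k => sum_f_R0 (fun r => h (block_start k + r)%nat) (len k)) K.
Proof.
  induction K.
  - replace (block_start 1 - 1)%nat with (len 0) by (simpl; lia); reflexivity.
  - pose proof (block_start_ge (S K)).
    rewrite (tech2 h (block_start (S K) - 1) (block_start (S (S K)) - 1)) by (simpl in *; lia).
    simpl sum_f_R0 at 3; rewrite <- IHK; f_equal.
    replace (block_start (S (S K)) - 1 - S (block_start (S K) - 1))%nat with (len (S K))
      by (simpl in *; lia).
    apply sum_eq; intros i _; f_equal; simpl in *; lia.
Qed.

Lemma ex_series_of_block_bounds (h : nat -> R) (bound : nat -> R) B :
  (forall j, 0 <= h j) ->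
  (forall k, sum_f_R0 (fun r => h (block_start k + r)%nat) (len k) <= bound k) ->
  (forall K, sum_f_R0 bound K <= B) ->
  ex_series h /\ Series h <= B.
Proof.
  intros Hh Hblock HB; apply ex_series_of_bounded_sums; auto; intros N.
  eapply Rle_trans;
    [apply (sum_f_R0_prefix_le h N (block_start (S N) - 1)); auto; pose proof (block_start_ge (S N)); lia |].
  rewrite sum_f_R0_blocks; eapply Rle_trans; [apply sum_Rle; intros; apply Hblock | apply HB].
Qed.

Definition block_shift_seq (x : nat -> Cx) (j : nat) : Cx :=
  if Nat.eqb (block_of (S j)) (block_of j) then x (S j) else C0.

Lemma Cnorm2_block_shift_seq_le x j : Cnorm2 (block_shift_seq x j) <= Cnorm2 (x (S j)).
Proof.
  unfold block_shift_seq; destruct (Nat.eqb _ _); [lra | rewrite Cnorm2_C0; apply Cnorm2_ge0].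
Qed.

Definition block_shift (x : l2) : l2.
Proof.
  exists (block_shift_seq (proj1_sig x)).
  apply (ex_series_le_nonneg _ (fun j => Cnorm2 (proj1_sig x (S j)))).
  - intros; split; [apply Cnorm2_ge0 | apply Cnorm2_block_shift_seq_le].
  - apply (ex_series_incr_1 (fun j => Cnorm2 (proj1_sig x j))), (proj2_sig x).
Defined.

Lemma block_shift_contraction : @contraction L2 block_shift.
Proof.
  split; [| split].
  - intros x y; apply l2_ext; intros n; simpl; unfold block_shift_seq.
    destruct (Nat.eqb _ _); auto; apply Cx_eq; unfold Cplus, C0; simpl; ring.
  - intros c x; apply l2_ext; intros n; simpl; unfold block_shift_seq.
    destruct (Nat.eqb _ _); auto; apply Cx_eq; unfold Cmult, C0; simpl; ring.
  - intros x; unfold Hnorm; apply sqrt_le_1_alt.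
    change (Re (l2inner (block_shift x) (block_shift x)) <= Re (l2inner x x)).
    rewrite !Re_l2inner_self; unfold l2norm2; cbn [proj1_sig block_shift].
    rewrite (Series_incr_1 (fun n => Cnorm2 (proj1_sig x n))) by apply (proj2_sig x).
    pose proof (Cnorm2_ge0 (proj1_sig x 0%nat)).
    assert (Series (fun n => Cnorm2 (block_shift_seq (proj1_sig x) n))
            <= Series (fun k => Cnorm2 (proj1_sig x (S k)))); [| lra].
    apply Series_le; [intros; split; [apply Cnorm2_ge0 | apply Cnorm2_block_shift_seq_le] |].
    apply (ex_series_incr_1 (fun j => Cnorm2 (proj1_sig x j))), (proj2_sig x).
Qed.

Lemma iter_block_shift n (x : l2) j :
  proj1_sig (Nat.iter n block_shift x) j
  = if Nat.eqb (block_of (j + n)) (block_of j) then proj1_sig x (j + n)%nat else C0.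
Proof.
  revert j; induction n; intros j.
  - simpl; rewrite Nat.add_0_r, Nat.eqb_refl; reflexivity.
  - simpl Nat.iter.
    change (proj1_sig (block_shift (Nat.iter n block_shift x)) j)
      with (block_shift_seq (proj1_sig (Nat.iter n block_shift x)) j).
    unfold block_shift_seq; rewrite IHn; replace (S j + n)%nat with (j + S n)%nat by lia.
    pose proof (block_of_mono j (S j) ltac:(lia)); pose proof (block_of_mono (S j) (j + S n) ltac:(lia)).
    destruct (Nat.eqb_spec (block_of (S j)) (block_of j));
      destruct (Nat.eqb_spec (block_of (j + S n)) (block_of (S j)));
      destruct (Nat.eqb_spec (block_of (j + S n)) (block_of j)); auto; lia.
Qed.

End Blocks.

Lemma Aseq_ge0 a n : 0 <= Aseq a n.
Proof. apply cond_pos_sum; intros; apply Cmod_ge0. Qed.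

Lemma Aseq_mono a n m : (n <= m)%nat -> Aseq a n <= Aseq a m.
Proof. intros; apply sum_f_R0_prefix_le; auto; intros; apply Cmod_ge0. Qed.

Lemma sum_Cmod_mul_Aseq_le a l : sum_f_R0 (fun n => Cmod (a n) * Aseq a n) l <= Aseq a l ^ 2.
Proof.
  induction l; unfold Aseq in *; simpl in *; [lra |].
  pose proof (Cmod_ge0 (a (S l))); pose proof (Aseq_ge0 a l); unfold Aseq in *; nra.
Qed.

Lemma Aseq_pos_lower_bound a :
  (exists r0, 0 < Aseq a r0) -> exists al, 0 < al /\ forall r, 0 < Aseq a r -> al <= Aseq a r.
Proof.
  intros [r0 Hr0]; revert Hr0; induction r0 as [| n IH]; intros Hn.
  - exists (Aseq a 0); split; auto; intros; apply Aseq_mono; lia.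
  - destruct (Rlt_or_le 0 (Aseq a n)) as [Hpos | Hnpos]; auto.
    exists (Aseq a (S n)); split; auto; intros r Hr.
    destruct (Nat.le_gt_cases r n); [| apply Aseq_mono; lia].
    pose proof (Aseq_mono a r n ltac:(lia)); lra.
Qed.

Lemma norlund_bounded_of_Aseq_zero a : (forall r, ~ 0 < Aseq a r) -> norlund_bounded a.
Proof.
  intros HA; exists 0; intros u M _ K; rewrite Rmult_0_l.
  rewrite (sum_eq _ (fun _ => 0)), sum_cte, Rmult_0_l, sqrt_0; [lra |].
  intros i _; replace (norlund_apply a u i) with C0; [unfold Cmod, C0; simpl; rewrite Rmult_0_l, Rplus_0_l, sqrt_0; ring |].
  unfold norlund_apply; rewrite (Csum_ext _ (fun _ => C0)).
  - induction i; simpl; auto; rewrite <- IHi; symmetry; apply Cplus_C0.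
  - intros j _; unfold norlund_entry; destruct (Nat.leb j i); [| apply Cmult_C0_l].
    destruct (Rlt_dec 0 (Aseq a i)) as [h |]; [destruct (HA i h) | apply Cmult_C0_l].
Qed.

(** * The counterexample built from badly behaved finite sections *)

Section Counterexample.

Variable a : nat -> Cx.
Variable len : nat -> nat.
Variable v : nat -> nat -> Cx.
Variable al : R.
Hypothesis al_pos : 0 < al.
Hypothesis al_le_Aseq : forall r, 0 < Aseq a r -> al <= Aseq a r.

Let X k := sum_Cnorm2 (v k) (len k).
Let Y k := sum_Cnorm2 (norlund_transpose a (v k) (len k)) (len k).
Hypothesis X_pos : forall k, 0 < X k.
Hypothesis Y_large : forall k, 16 ^ k * X k <= Y k.

(* Block [k] is normalised to carry mass [4^-k]. *)
Let scale k := sqrt ((/4) ^ k / X k).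

Lemma scale_sq k : scale k ^ 2 = (/4) ^ k / X k.
Proof.
  unfold scale; rewrite pow2_sqrt; auto.
  pose proof (X_pos k); pose proof (pow_le (/4) k ltac:(lra)); apply Rle_mult_inv_pos; auto.
Qed.

Let w k r := if Rlt_dec 0 (Aseq a r) then Cmult (RtoC (/ Aseq a r)) (v k r) else C0.

Lemma Cnorm2_w_le k r : Cnorm2 (w k r) <= / al ^ 2 * Cnorm2 (v k r).
Proof.
  unfold w; destruct (Rlt_dec 0 (Aseq a r)) as [HA |].
  - rewrite Cnorm2_RtoC_mult; apply Rmult_le_compat_r; [apply Cnorm2_ge0 |].
    rewrite <- pow_inv; pose proof (al_le_Aseq r HA).
    apply pow_incr; split; [left; apply Rinv_0_lt_compat; lra | apply Rinv_le_contravar; lra].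
  - rewrite Cnorm2_C0; apply Rmult_le_pos; [left; apply Rinv_0_lt_compat, pow_lt; auto | apply Cnorm2_ge0].
Qed.

Lemma Cnorm2_w_mul_Aseq_le k r : Cnorm2 (w k r) * Aseq a r ^ 2 <= Cnorm2 (v k r).
Proof.
  unfold w; destruct (Rlt_dec 0 (Aseq a r)).
  - rewrite Cnorm2_RtoC_mult; right; field; lra.
  - rewrite Cnorm2_C0, Rmult_0_l; apply Cnorm2_ge0.
Qed.

Let f_seq j := Cmult (RtoC (scale (block_of len j))) (w (block_of len j) (block_offset len j)).

Lemma f_seq_at k r : (r <= len k)%nat -> f_seq (block_start len k + r) = Cmult (RtoC (scale k)) (w k r).
Proof. intros Hr; unfold f_seq; rewrite block_of_at, block_offset_at by auto; reflexivity. Qed.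

Lemma ex_series_f_seq : ex_series (fun j => Cnorm2 (f_seq j)).
Proof.
  eapply proj1; apply (ex_series_of_block_bounds len _ (fun k => / al ^ 2 * (/4) ^ k) (/ al ^ 2 * 2)
                         (fun _ => Cnorm2_ge0 _)).
  - intros k; rewrite (sum_eq _ (fun r => scale k ^ 2 * Cnorm2 (w k r)))
      by (intros; rewrite f_seq_at by auto; apply Cnorm2_RtoC_mult).
    rewrite sum_f_R0_mult_l, scale_sq.
    eapply Rle_trans; [apply Rmult_le_compat_l; [| apply sum_growing; intros r; apply Cnorm2_w_le] |].
    + rewrite <- scale_sq; apply pow2_ge_0.
    + rewrite sum_f_R0_mult_l; fold (sum_Cnorm2 (v k) (len k)) (X k).
      pose proof (X_pos k); right; field; split; apply Rgt_not_eq; auto; apply pow_lt; auto.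
  - intros K; rewrite sum_f_R0_mult_l; apply Rmult_le_compat_l; [| apply geometric_quarter_sum_le].
    left; apply Rinv_0_lt_compat, pow_lt; auto.
Qed.

Let f : L2 := exist _ f_seq ex_series_f_seq.

(* [P^n f] keeps exactly the entries of [f] lying at offset [>= n] in their block. *)
Let tail_mass n m := if Nat.leb n (block_offset len m) then Cnorm2 (f_seq m) else 0.

Lemma tail_mass_bounds n m : 0 <= tail_mass n m <= Cnorm2 (f_seq m).
Proof. unfold tail_mass; pose proof (Cnorm2_ge0 (f_seq m)); destruct (Nat.leb _ _); lra. Qed.

Lemma ex_series_tail_mass n : ex_series (tail_mass n).
Proof. exact (ex_series_le_nonneg _ _ (tail_mass_bounds n) ex_series_f_seq). Qed.

Lemma Hnorm_iter_block_shift_sq n : @Hnorm L2 (Nat.iter n (block_shift len) f) ^ 2 = Series (tail_mass n).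
Proof.
  rewrite Hnorm_L2_sq; unfold l2norm2.
  rewrite (Series_ext _ (fun j => tail_mass n (n + j))).
  - destruct n; [reflexivity |].
    rewrite (Series_incr_n (tail_mass (S n)) (S n)) by (lia || apply ex_series_tail_mass).
    rewrite (sum_eq _ (fun _ => 0)), sum_cte; [simpl pred; ring |].
    intros i Hi; unfold tail_mass; pose proof (block_offset_le len i).
    destruct (Nat.leb_spec (S n) (block_offset len i)); [simpl in Hi; lia | reflexivity].
  - intros j; rewrite iter_block_shift; unfold tail_mass; cbn [proj1_sig f].
    replace (n + j)%nat with (j + n)%nat by lia.
    destruct (Nat.eqb_spec (block_of len (j + n)) (block_of len j)) as [E | E];
      rewrite block_of_shift_iff in E; destruct (Nat.leb_spec n (block_offset len (j + n))); auto;
      [lia | lia | apply Cnorm2_C0].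
Qed.

Let mass m := scale (block_of len m) ^ 2 * Cnorm2 (v (block_of len m) (block_offset len m)).

Lemma Series_mass_le : ex_series mass /\ Series mass <= 2.
Proof.
  apply (ex_series_of_block_bounds len _ (fun k => (/4) ^ k) 2).
  - intros; apply Rmult_le_pos; [apply pow2_ge_0 | apply Cnorm2_ge0].
  - intros k; rewrite (sum_eq _ (fun r => scale k ^ 2 * Cnorm2 (v k r)))
      by (intros; unfold mass; rewrite block_of_at, block_offset_at by auto; reflexivity).
    rewrite sum_f_R0_mult_l, scale_sq; fold (sum_Cnorm2 (v k) (len k)) (X k).
    right; field; apply Rgt_not_eq, X_pos.
  - apply geometric_quarter_sum_le.
Qed.

Lemma Cnorm2_f_seq_mul_Aseq_le m : Cnorm2 (f_seq m) * Aseq a (block_offset len m) ^ 2 <= mass m.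
Proof.
  unfold f_seq, mass; rewrite Cnorm2_RtoC_mult, Rmult_assoc.
  apply Rmult_le_compat_l; [apply pow2_ge_0 | apply Cnorm2_w_mul_Aseq_le].
Qed.

(* Entry [m] of [f] is weighted by [sum_(n <= offset m) |a_n| A_n <= A_(offset m)^2],
   which the division by [A] absorbs. *)
Lemma weighted_tail_mass_le_mass N m :
  sum_f_R0 (fun n => Cmod (a n) * Aseq a n * tail_mass n m) N <= mass m.
Proof.
  eapply Rle_trans; [| apply Cnorm2_f_seq_mul_Aseq_le].
  rewrite (sum_eq _ (fun n => Cnorm2 (f_seq m)
             * (if Nat.leb n (block_offset len m) then Cmod (a n) * Aseq a n else 0)))
    by (intros; unfold tail_mass; destruct (Nat.leb _ _); ring).
  rewrite sum_f_R0_mult_l; apply Rmult_le_compat_l; [apply Cnorm2_ge0 |].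
  eapply Rle_trans; [apply sum_f_R0_truncated_le | apply sum_Cmod_mul_Aseq_le].
  intros; apply Rmult_le_pos; [apply Cmod_ge0 | apply Aseq_ge0].
Qed.

Lemma weighted_orbit_series_converges :
  Rseries_converges (fun n => Cmod (a n) * Aseq a n * @Hnorm L2 (Nat.iter n (block_shift len) f) ^ 2).
Proof.
  destruct Series_mass_le as [Hmass_ex Hmass_le].
  assert (Hcoef : forall n, 0 <= Cmod (a n) * Aseq a n)
    by (intros; apply Rmult_le_pos; [apply Cmod_ge0 | apply Aseq_ge0]).
  destruct (ex_series_of_bounded_sums
              (fun n => Cmod (a n) * Aseq a n * @Hnorm L2 (Nat.iter n (block_shift len) f) ^ 2) 2)
    as [[l Hl] _]; [| | exists l; apply is_series_Reals, Hl].
  - intros n; rewrite Hnorm_iter_block_shift_sq; apply Rmult_le_pos; auto.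
    apply Series_nonneg; [apply tail_mass_bounds | apply ex_series_tail_mass].
  - intros N; rewrite (sum_eq _ (fun n => Cmod (a n) * Aseq a n * Series (tail_mass n)))
      by (intros; rewrite Hnorm_iter_block_shift_sq; reflexivity).
    destruct (sum_f_R0_Series_exchange (fun n => Cmod (a n) * Aseq a n) tail_mass N ex_series_tail_mass)
      as [_ ->].
    eapply Rle_trans; [| exact Hmass_le]; apply Series_le; auto; intros m; split.
    + apply cond_pos_sum; intros n; apply Rmult_le_pos; auto; apply tail_mass_bounds.
    + apply weighted_tail_mass_le_mass.
Qed.

Let orbit n : L2 := l2scal (a n) (Nat.iter n (block_shift len) f).

(* Within block [k], [a_n (P^n f)] at offset [r] is [a_n f] at offset [r + n]; summing over
   [n] gives [scale k] times [sum_i a_(i - r) v_k(i) / A_i = (N_a^T v_k)_r]. *)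
Lemma Hpsum_orbit_on_block k r m : (r <= len k)%nat -> (len k <= m)%nat ->
  proj1_sig (Hpsum orbit m) (block_start len k + r)%nat
  = Cmult (RtoC (scale k)) (norlund_transpose a (v k) (len k) r).
Proof.
  intros Hr Hm; rewrite Hpsum_L2_coord.
  set (q i := if Nat.leb r i then (if Nat.leb i (len k) then
                Cmult (RtoC (scale k)) (Cmult (norlund_entry a i r) (v k i)) else C0) else C0).
  rewrite (Csum_ext _ (fun n => q (r + n)%nat)).
  2:{ intros n _; unfold orbit; cbn [proj1_sig l2scal].
      rewrite iter_block_shift; cbn [proj1_sig f]; rewrite (block_of_at len k r Hr).
      unfold q; destruct (Nat.leb_spec r (r + n)); [| lia].
      destruct (Nat.leb_spec (r + n) (len k)).
      - replace (block_start len k + r + n)%nat with (block_start len k + (r + n))%nat by lia.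
        rewrite (block_of_at len k (r + n)), Nat.eqb_refl, f_seq_at by auto.
        unfold w, norlund_entry; destruct (Nat.leb_spec r (r + n)); [| lia].
        replace (r + n - r)%nat with n by lia.
        destruct (Rlt_dec 0 (Aseq a (r + n))); apply Cx_eq; unfold Cmult, RtoC, C0; simpl; ring.
      - pose proof (block_of_ge len (S k) (block_start len k + r + n) ltac:(simpl; lia)).
        destruct (Nat.eqb_spec (block_of len (block_start len k + r + n)) k); [lia |].
        apply Cx_eq; unfold Cmult, C0; simpl; ring. }
  rewrite Csum_shift by (intros i Hi; unfold q; destruct (Nat.leb_spec r i); [lia | reflexivity]).
  rewrite (Csum_zero_tail q (len k) (r + m)); [| | lia].
  - unfold norlund_transpose; rewrite Csum_mult_l; apply Csum_ext; intros i Hi; unfold q.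
    destruct (Nat.leb_spec i (len k)); [| lia]; destruct (Nat.leb_spec r i); [reflexivity |].
    rewrite norlund_entry_above_diag by lia; apply Cx_eq; unfold Cmult, C0, RtoC; simpl; ring.
  - intros i Hi; unfold q; destruct (Nat.leb r i); auto.
    destruct (Nat.leb_spec i (len k)); [lia | reflexivity].
Qed.

Lemma l2norm2_Hpsum_orbit_ge k m : (len k <= m)%nat -> 4 ^ k <= l2norm2 (Hpsum orbit m).
Proof.
  intros Hm; unfold l2norm2.
  eapply Rle_trans; [| apply sum_f_R0_le_Series; [intros; apply Cnorm2_ge0 | apply (proj2_sig (Hpsum orbit m))]].
  eapply Rle_trans; [| apply (sum_f_R0_window_le _ (block_start len k) (len k)); intros; apply Cnorm2_ge0].
  rewrite (sum_eq _ (fun r => scale k ^ 2 * Cnorm2 (norlund_transpose a (v k) (len k) r)))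
    by (intros r Hr; rewrite Hpsum_orbit_on_block by lia; apply Cnorm2_RtoC_mult).
  rewrite sum_f_R0_mult_l, scale_sq; fold (sum_Cnorm2 (norlund_transpose a (v k) (len k)) (len k)) (Y k).
  pose proof (Y_large k); pose proof (X_pos k); pose proof (pow_lt (/4) k ltac:(lra)).
  replace (4 ^ k) with ((/4) ^ k / X k * (16 ^ k * X k)).
  - apply Rmult_le_compat_l; auto; left; apply Rdiv_lt_0_compat; auto.
  - replace (16 ^ k) with (4 ^ k * 4 ^ k) by (rewrite <- Rpow_mult_distr; f_equal; lra).
    rewrite pow_inv; field; split; [apply pow_nonzero | ]; lra.
Qed.

Lemma orbit_series_diverges : ~ Hseries_converges orbit.
Proof.
  intros Hcv; destruct (Hseries_converges_L2_bounded orbit Hcv) as [B [N HB]].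
  destruct (pow4_unbounded B) as [k Hk].
  pose proof (HB (max N (len k)) ltac:(lia)).
  pose proof (l2norm2_Hpsum_orbit_ge k (max N (len k)) ltac:(lia)); lra.
Qed.

End Counterexample.

Lemma norlund_transpose_unbounded_sections a : ~ norlund_bounded a ->
  exists (len : nat -> nat) (v : nat -> nat -> Cx), forall k,
    0 < sum_Cnorm2 (v k) (len k) /\
    16 ^ k * sum_Cnorm2 (v k) (len k) <= sum_Cnorm2 (norlund_transpose a (v k) (len k)) (len k).
Proof.
  intros Hnb.
  destruct (choice (fun (k : nat) (p : nat * (nat -> Cx)) =>
              0 < sum_Cnorm2 (snd p) (fst p) /\
              16 ^ k * sum_Cnorm2 (snd p) (fst p)
              <= sum_Cnorm2 (norlund_transpose a (snd p) (fst p)) (fst p))) as [F HF].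
  - intros k; destruct (norlund_transpose_unbounded a (16 ^ k) Hnb ltac:(apply pow_lt; lra))
      as [K [v Hv]]; exists (K, v); exact Hv.
  - exists (fun k => fst (F k)), (fun k => snd (F k)); exact HF.
Qed.

Theorem mainTheorem7 (a : nat -> Cx) :
  (forall (H : HilbertSpace) (P : H -> H) (f : H),
      contraction P ->
      Rseries_converges
        (fun n => Cmod (a n) * Aseq a n * (Hnorm (Nat.iter n P f)) ^ 2) ->
      Hseries_converges (fun n => Hscal (a n) (Nat.iter n P f))) ->
  norlund_bounded a.
Proof.
  intros Hyp; apply NNPP; intros Hnb.
  destruct (classic (exists r, 0 < Aseq a r)) as [HA | HA];
    [| apply Hnb, norlund_bounded_of_Aseq_zero; intros r Hr; apply HA; exists r; exact Hr].
  destruct (Aseq_pos_lower_bound a HA) as [al [al_pos al_le]].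
  destruct (norlund_transpose_unbounded_sections a Hnb) as [len [v Hv]].
  assert (X_pos : forall k, 0 < sum_Cnorm2 (v k) (len k)) by (intros k; apply Hv).
  assert (Y_large : forall k, 16 ^ k * sum_Cnorm2 (v k) (len k)
                              <= sum_Cnorm2 (norlund_transpose a (v k) (len k)) (len k))
    by (intros k; apply Hv).
  apply (orbit_series_diverges a len v al al_pos al_le X_pos Y_large).
  apply Hyp; [apply block_shift_contraction |].
  exact (weighted_orbit_series_converges a len v al al_pos al_le X_pos).
Qed.
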